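(* Let $G=(V,E)$ be a finite simple connected graph of order $n\geq 2$. Then $\alpha_0(S(G)) = n-\beta^*_0(G)$.
   Context: For a finite simple graph $G=(V,E)$, the splitting graph $S(G)$ is obtained from $G$ by adding, for each vertex $v\in V$, a new vertex $v'$, and joining $v'$ to a vertex $u\in V$ if and only if $uv\in E$ (the new vertices are pairwise non-adjacent; the edges of $G$ are kept). $\alpha_0(H)$ denotes the vertex cover number of a graph $H$ (minimum size of a set of vertices meeting every edge). For a graph $G$ of order $n\geq 2$, $\beta_0^*(G):=\max\{|S|-|N(S)| : S \text{ is an independent set of } G\}$, where $N(S)$ is the set of vertices of $G$ adjacent to some vertex of $S$ (the empty set counts as an independent set). *)

From mathcomp Require Import all_boot all_order all_algebra.
Set Implicit Arguments. Unset Strict Implicit. Unset Printing Implicit Defensive.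
Import Order.TTheory GRing.Theory Num.Theory.

Definition simple_graph (V : finType) (e : rel V) : Prop :=
  symmetric e /\ irreflexive e.

Definition connected_graph (V : finType) (e : rel V) : Prop :=
  forall x y : V, connect e x y.

(* Splitting graph S(G): vertices V + V, inl v = v, inr v = v'.
   Edges: original edges, plus v'--u iff uv in E. *)
Definition split_rel (V : finType) (e : rel V) : rel (V + V) :=
  fun a b =>
    match a, b with
    | inl u, inl v => e u v
    | inl u, inr v => e u v
    | inr u, inl v => e u v
    | inr _, inr _ => false
    end.

Definition is_vertex_cover (W : finType) (f : rel W) (C : {set W}) : bool :=
  [forall x : W, forall y : W, f x y ==> (x \in C) || (y \in C)].

(* vertex cover number: minimum size of a vertex cover (setT is one). *)
Definition vertex_cover_number (W : finType) (f : rel W) : nat :=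
  \big[minn/#|W|]_(C : {set W} | is_vertex_cover f C) #|C|.

Definition is_independent (V : finType) (e : rel V) (S : {set V}) : bool :=
  [forall x in S, forall y in S, ~~ e x y].

Definition nbhd (V : finType) (e : rel V) (S : {set V}) : {set V} :=
  [set y | [exists x in S, e x y]].

(* beta_0^*(G) = max over independent S of |S| - |N(S)| (integer-valued;
   the empty set gives 0, so 0 is a valid initial value). *)
Definition beta0_star (V : finType) (e : rel V) : int :=
  \big[Order.max/0%R]_(S : {set V} | is_independent e S)
     ((#|S|%:Z - #|nbhd e S|%:Z)%R).

From mathcomp Require Import all_boot all_order all_algebra.
Import Order.TTheory GRing.Theory Num.Theory.

Set Implicit Arguments.
Unset Strict Implicit.
Unset Printing Implicit Defensive.

(* An independent set S of G yields the cover (V \ S) + N(S)' of S(G), of size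
   n - (|S| - |N(S)|).  Conversely, if C covers S(G), the set S of original
   vertices missed by C is independent, and C contains the cover built from S
   because every v in N(S) forces v' into C.  So a minimum cover of S(G) can be
   taken of this form, and minimising its size maximises |S| - |N(S)|. *)

Section Extremal.
Variables (W : finType) (f : rel W).

Lemma vertex_cover_number_le (C : {set W}) :
  is_vertex_cover f C -> vertex_cover_number f <= #|C|.
Proof.
by move=> coverC; rewrite /vertex_cover_number -minEnat; exact: (@bigmin_le_cond _ nat).
Qed.

Lemma vertex_cover_number_attained :
  exists2 C : {set W}, is_vertex_cover f C & vertex_cover_number f = #|C|.
Proof.
apply: (big_ind (fun m => exists2 C : {set W}, is_vertex_cover f C & m = #|C|))
  => [|m p [C coverC ->] [D coverD ->]|].
- exists setT; last by rewrite cardsT.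
  by apply/forallP => x; apply/forallP => y; rewrite in_setT implybT.
- by rewrite /minn; case: ifP => _; [exists C | exists D].
- by move=> C coverC; exists C.
Qed.

Lemma beta0_star_ge (S : {set W}) :
  is_independent f S -> (#|S|%:Z - #|nbhd f S|%:Z <= beta0_star f)%R.
Proof. exact: le_bigmax_cond. Qed.

Lemma nbhd0 : nbhd f set0 = set0.
Proof. by apply/setP => y; rewrite !inE; apply/existsP => -[x]; rewrite inE. Qed.

Lemma beta0_star_attained :
  exists2 S : {set W}, is_independent f S &
    beta0_star f = (#|S|%:Z - #|nbhd f S|%:Z)%R.
Proof.
apply: (big_ind (fun m =>
  exists2 S : {set W}, is_independent f S & m = (#|S|%:Z - #|nbhd f S|%:Z)%R))
  => [|m p [S indS ->] [T indT ->]|].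
- exists set0; last by rewrite nbhd0 !cards0.
  by apply/forallP => x; rewrite inE.
- by rewrite maxEle; case: ifP => _; [exists T | exists S].
- by move=> S indS; exists S.
Qed.

End Extremal.

Lemma card_set_sum (A B : finType) (C : {set A + B}) :
  #|C| = #|inl @^-1: C| + #|inr @^-1: C|.
Proof.
rewrite -!sum1_card big_mkcond big_sumType /=.
by congr (_ + _); rewrite [RHS]big_mkcond; apply: eq_bigr => x _; rewrite inE.
Qed.

Section SplittingGraph.
Variables (V : finType) (e : rel V).
Hypothesis e_sym : symmetric e.

Definition split_cover (S : {set V}) : {set V + V} :=
  [set x | match x with inl u => u \notin S | inr v => v \in nbhd e S end].

Lemma split_cover_is_cover (S : {set V}) :
  is_independent e S -> is_vertex_cover (split_rel e) (split_cover S).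
Proof.
move=> /forallP indS; apply/forallP => x; apply/forallP => y; apply/implyP.
case: x => [u|u]; case: y => [v|v] //= euv; rewrite !inE.
- case uS: (u \in S) => //=; case vS: (v \in S) => //=.
  by move: (indS u); rewrite uS => /forallP /(_ v); rewrite vS euv.
- case uS: (u \in S) => //=.
  by apply/existsP; exists u; rewrite uS.
- case vS: (v \in S); rewrite ?orbT // orbF.
  by apply/existsP; exists v; rewrite vS e_sym.
Qed.

Lemma card_split_cover (S : {set V}) :
  (#|split_cover S|%:Z = #|V|%:Z - (#|S|%:Z - #|nbhd e S|%:Z))%R.
Proof.
rewrite card_set_sum.
have -> : inl @^-1: split_cover S = ~: S by apply/setP => u; rewrite !inE.
have -> : inr @^-1: split_cover S = nbhd e S by apply/setP => v; rewrite !inE.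
by rewrite cardsCs setCK PoszD -subzn ?max_card // opprB addrA addrAC.
Qed.

Lemma independent_uncovered (C : {set V + V}) :
  is_vertex_cover (split_rel e) C -> is_independent e (~: (inl @^-1: C)).
Proof.
move=> /forallP coverC; apply/forallP => u; apply/implyP; rewrite !inE => uC.
apply/forallP => v; apply/implyP; rewrite !inE => vC; apply/negP => euv.
move: (coverC (inl u)) => /forallP /(_ (inl v)).
by rewrite /= euv (negbTE uC) (negbTE vC).
Qed.

Lemma split_cover_uncovered_subset (C : {set V + V}) :
  is_vertex_cover (split_rel e) C -> split_cover (~: (inl @^-1: C)) \subset C.
Proof.
move=> /forallP coverC; apply/subsetP => -[u|v]; rewrite !inE ?negbK // => /existsP [u].
rewrite !inE => /andP [uC euv].
by move: (coverC (inl u)) => /forallP /(_ (inr v)); rewrite /= euv (negbTE uC).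
Qed.

End SplittingGraph.

Theorem corollary1 (V : finType) (e : rel V) :
  simple_graph e -> connected_graph e -> 2 <= #|V| ->
  ((vertex_cover_number (split_rel e))%:Z = #|V|%:Z - beta0_star e)%R.
Proof.
move=> [e_sym _] _ _; apply/eqP; rewrite eq_le; apply/andP; split.
- have [S indS ->] := beta0_star_attained e.
  by rewrite -card_split_cover lez_nat vertex_cover_number_le // split_cover_is_cover.
- have [C coverC ->] := vertex_cover_number_attained (split_rel e).
  set S := ~: (inl @^-1: C).
  have le_cover : (#|split_cover e S|%:Z <= #|C|%:Z)%R.
    by rewrite lez_nat subset_leq_card // split_cover_uncovered_subset.
  apply: le_trans le_cover.
  by rewrite card_split_cover lerD2l lerN2 beta0_star_ge // independent_uncovered.
Qed.
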